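(* Let $S=(-1,1)^2$ and let $W\ge1$ be an integer. For a polynomial $$u(\xi,\eta)=\sum_{i=0}^{W}\sum_{j=0}^{W}a_{i,j}L_i(\xi)L_j(\eta)$$ (real coefficients $a_{i,j}$, $L_i$ the Legendre polynomial of degree $i$), define the quadratic forms $$\mathcal{B}(u)=\|u\|_{H^4(S)}^2=\int_S\sum_{|\alpha|\le 4}|D^{\alpha}_{\xi,\eta}u|^2\,d\xi\,d\eta$$ and $$\mathcal{C}(u)=\int_S\left(u_{\xi\xi\xi\xi}^2+u_{\eta\eta\eta\eta}^2+u_{\xi\xi\xi}^2+u_{\eta\eta\eta}^2+u_{\xi\xi}^2+u_{\eta\eta}^2+u_{\xi}^2+u_{\eta}^2+u^2\right)d\xi\,d\eta.$$ Then $\mathcal{B}$ and $\mathcal{C}$ are spectrally equivalent: there is a constant $M>0$ independent of $W$ such that for every such polynomial $u$, $$\frac{1}{M}\,\mathcal{B}(u)\le \mathcal{C}(u)\le \mathcal{B}(u).$$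
   Context: Subscripts denote partial derivatives, e.g. $u_{\xi\eta\eta}=\partial^3u/\partial\xi\,\partial\eta^2$; $D^{\alpha}_{\xi,\eta}$ is the partial derivative with multi-index $\alpha=(\alpha_1,\alpha_2)$, $|\alpha|=\alpha_1+\alpha_2$. *)

From Stdlib Require Import Reals.
From Coquelicot Require Import Coquelicot.
Open Scope R_scope.

(* (L_n(x), L_{n+1}(x)) via Bonnet's recurrence
   (n+2) L_{n+2} = (2n+3) x L_{n+1} - (n+1) L_n, with L_0 = 1, L_1 = x. *)
Fixpoint legendre_pair (n : nat) (x : R) : R * R :=
  match n with
  | O => (1, x)
  | S m => let (p, q) := legendre_pair m x in
           (q, ((2 * INR m + 3) * x * q - (INR m + 1) * p) / (INR m + 2))
  end.

Definition legendre (n : nat) (x : R) : R := fst (legendre_pair n x).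

Definition upoly (W : nat) (a : nat -> nat -> R) (xi eta : R) : R :=
  sum_f_R0 (fun i => sum_f_R0 (fun j => a i j * legendre i xi * legendre j eta) W) W.

Definition pderiv (k l : nat) (u : R -> R -> R) (xi eta : R) : R :=
  Derive_n (fun s => Derive_n (fun t => u s t) l eta) k xi.

Definition intS (f : R -> R -> R) : R :=
  RInt (fun xi => RInt (fun eta => f xi eta) (-1) 1) (-1) 1.

Definition Bform (u : R -> R -> R) : R :=
  intS (fun xi eta =>
    sum_f_R0 (fun k => sum_f_R0 (fun l => (pderiv k l u xi eta) ^ 2) (4 - k)) 4).

Definition Cform (u : R -> R -> R) : R :=
  intS (fun xi eta =>
    (pderiv 4 0 u xi eta) ^ 2 + (pderiv 0 4 u xi eta) ^ 2
  + (pderiv 3 0 u xi eta) ^ 2 + (pderiv 0 3 u xi eta) ^ 2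
  + (pderiv 2 0 u xi eta) ^ 2 + (pderiv 0 2 u xi eta) ^ 2
  + (pderiv 1 0 u xi eta) ^ 2 + (pderiv 0 1 u xi eta) ^ 2
  + (pderiv 0 0 u xi eta) ^ 2).

From Stdlib Require Import Reals Lra Lia.
From Coquelicot Require Import Coquelicot.
Open Scope R_scope.

(* Only the mixed derivatives of order 2 to 4 in B are missing from C, so C <= B, and the point
   is to bound the mixed ones. Each factor of the tensor expansion
   u = sum_i L_i(xi) (sum_j a_ij L_j(eta)) is extended from (-1,1) to (-2,2) by a Hestenes
   reflection times a cutoff. The extension is C^3, vanishes to order 4 at -2 and 2, and its
   derivatives of order <= 4 have L^2(-2,2) norms bounded by those on (-1,1), with a constant
   independent of the function. On (-2,2)^2 integration by parts therefore has no boundary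
   terms, e.g. ||D^(2,2) U||^2 = <D^(4,0) U, D^(0,4) U> <= (||D^(4,0) U||^2 + ||D^(0,4) U||^2) / 2
   for the extension U, and similarly for the other mixed derivatives. Restricting to S and
   bounding the pure derivatives of U by those of u gives B <= M C. *)

(** * Finite sums, polynomial functions and the derivatives of u *)

Lemma sum_mult_l (c : R) (f : nat -> R) N :
  sum_f_R0 (fun i => c * f i) N = c * sum_f_R0 f N.
Proof. induction N; simpl; [|rewrite IHN]; ring. Qed.

Lemma sum_mult_r (c : R) (f : nat -> R) N :
  sum_f_R0 (fun i => f i * c) N = sum_f_R0 f N * c.
Proof. induction N; simpl; [|rewrite IHN]; ring. Qed.

Lemma sum_mult_sum (f g : nat -> R) N M :
  sum_f_R0 f N * sum_f_R0 g M =
  sum_f_R0 (fun i => sum_f_R0 (fun j => f i * g j) M) N.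
Proof.
  rewrite <- sum_mult_r. apply sum_eq; intros. rewrite <- sum_mult_l. reflexivity.
Qed.

Lemma sum_ge_last (f : nat -> R) N : (forall i, 0 <= f i) -> f N <= sum_f_R0 f N.
Proof.
  intros H. destruct N; simpl. lra.
  assert (0 <= sum_f_R0 f N) by (apply cond_pos_sum; auto). lra.
Qed.

(* Cauchy-Schwarz against the constant vector 1; the induction step is AM-GM. *)
Lemma sum_sqr_le (t : nat -> R) N :
  (sum_f_R0 t N) ^ 2 <= INR (S N) * sum_f_R0 (fun i => t i ^ 2) N.
Proof.
  induction N. simpl. lra.
  rewrite !S_INR. rewrite S_INR in IHN. cbn [sum_f_R0].
  set (s := sum_f_R0 t N) in *. set (q := sum_f_R0 (fun i => t i ^ 2) N) in *.
  set (x := t (S N)).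
  assert (HN : 0 < INR N + 1) by (pose proof (pos_INR N); lra).
  assert (Hcross : 2 * s * x <= s ^ 2 / (INR N + 1) + (INR N + 1) * x ^ 2).
  { apply Rmult_le_reg_r with (INR N + 1); auto.
    field_simplify; [|lra].
    assert (0 <= (s - (INR N + 1) * x) ^ 2) by apply pow2_ge_0. nra. }
  assert (Hs : s ^ 2 / (INR N + 1) <= q).
  { apply Rmult_le_reg_r with (INR N + 1); [lra|].
    unfold Rdiv. rewrite Rmult_assoc, Rinv_l by lra. lra. }
  nra.
Qed.

Inductive poly_fun : (R -> R) -> Prop :=
| poly_const c : poly_fun (fun _ => c)
| poly_id : poly_fun (fun x => x)
| poly_plus f g : poly_fun f -> poly_fun g -> poly_fun (fun x => f x + g x)
| poly_mult f g : poly_fun f -> poly_fun g -> poly_fun (fun x => f x * g x)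
| poly_ext f g : poly_fun f -> (forall x, f x = g x) -> poly_fun g.

Lemma poly_fun_derive f :
  poly_fun f -> exists g, poly_fun g /\ forall x, is_derive f x (g x).
Proof.
  induction 1 as [c | | f g _ [f' [Hf' Df]] _ [g' [Hg' Dg]]
                 | f g Hf [f' [Hf' Df]] Hg [g' [Hg' Dg]] | f g _ [f' [Hf' Df]] E].
  - exists (fun _ => 0). split. constructor. intros x; apply (is_derive_const c x).
  - exists (fun _ => 1). split. constructor. intros x; apply (is_derive_id x).
  - exists (fun x => f' x + g' x). split. now constructor.
    intros x. apply (is_derive_plus f g); auto.
  - exists (fun x => f' x * g x + f x * g' x). split.
    + constructor; constructor; auto.
    + intros x. apply (is_derive_mult f g); auto. intros; apply Rmult_comm.
  - exists f'. split; auto. intros x. apply (is_derive_ext f g); auto.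
Qed.

Lemma poly_fun_Derive_n f k : poly_fun f -> poly_fun (Derive_n f k).
Proof.
  intros Hf. induction k as [|k IHk]; simpl; auto.
  destruct (poly_fun_derive _ IHk) as [g [Hg Dg]].
  apply poly_ext with g; auto. intros x. symmetry. apply is_derive_unique. auto.
Qed.

Lemma poly_fun_is_derive_n f k x : poly_fun f ->
  is_derive (Derive_n f k) x (Derive_n f (S k) x).
Proof.
  intros Hf. destruct (poly_fun_derive _ (poly_fun_Derive_n f k Hf)) as [g [_ Dg]].
  simpl. rewrite (is_derive_unique _ _ _ (Dg x)). auto.
Qed.

Lemma poly_fun_ex_derive_n f k x : poly_fun f -> ex_derive_n f k x.
Proof.
  intros Hf. destruct k; simpl; auto. eexists. apply poly_fun_is_derive_n. auto.
Qed.

Lemma poly_fun_continuous f x : poly_fun f -> continuous f x.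
Proof.
  intros Hf. destruct (poly_fun_derive f Hf) as [g [_ Dg]].
  apply (ex_derive_continuous (K:=R_AbsRing) (V:=R_NormedModule)). eexists; eauto.
Qed.

Lemma poly_fun_lin_comb (c : nat -> R) (f : nat -> R -> R) N :
  (forall i, poly_fun (f i)) -> poly_fun (fun x => sum_f_R0 (fun i => c i * f i x) N).
Proof.
  intros H. induction N; simpl; repeat constructor; auto.
Qed.

Lemma legendre_pair_poly_fun n :
  poly_fun (fun x => fst (legendre_pair n x)) /\ poly_fun (fun x => snd (legendre_pair n x)).
Proof.
  induction n as [|n [H1 H2]]; simpl; split; try constructor.
  - apply poly_ext with (fun x => snd (legendre_pair n x)); auto.
    intros x. destruct (legendre_pair n x); reflexivity.
  - apply poly_ext with (fun x => ((2 * INR n + 3) * x * snd (legendre_pair n x)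
        + (- (INR n + 1)) * fst (legendre_pair n x)) * / (INR n + 2)).
    + repeat constructor; auto.
    + intros x. destruct (legendre_pair n x); simpl. unfold Rdiv. ring.
Qed.

Lemma legendre_poly_fun n : poly_fun (legendre n).
Proof. apply legendre_pair_poly_fun. Qed.

Lemma Derive_n_lin_comb (c : nat -> R) (g : nat -> R -> R) N k x :
  (forall i, poly_fun (g i)) ->
  Derive_n (fun t => sum_f_R0 (fun i => c i * g i t) N) k x =
  sum_f_R0 (fun i => c i * Derive_n (g i) k x) N.
Proof.
  intros Hg. induction N as [|N IHN]; simpl.
  - apply Derive_n_scal_l.
  - rewrite Derive_n_plus, IHN, Derive_n_scal_l. reflexivity.
    all: apply filter_forall; intros y m _; apply poly_fun_ex_derive_n.
    + apply poly_fun_lin_comb; auto.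
    + repeat constructor; auto.
Qed.

Definition upoly_row (W : nat) (a : nat -> nat -> R) (i : nat) (t : R) : R :=
  sum_f_R0 (fun j => a i j * legendre j t) W.

Lemma upoly_row_poly_fun W a i : poly_fun (upoly_row W a i).
Proof. apply poly_fun_lin_comb. intros j. apply legendre_poly_fun. Qed.

Lemma pderiv_upoly W a k l x y :
  pderiv k l (upoly W a) x y =
  sum_f_R0 (fun i => Derive_n (legendre i) k x * Derive_n (upoly_row W a i) l y) W.
Proof.
  unfold pderiv.
  transitivity (Derive_n (fun s =>
    sum_f_R0 (fun i => Derive_n (upoly_row W a i) l y * legendre i s) W) k x).
  - apply Derive_n_ext. intros s.
    rewrite (Derive_n_ext _ (fun t => sum_f_R0 (fun i => legendre i s * upoly_row W a i t) W)).
    + rewrite Derive_n_lin_comb by apply upoly_row_poly_fun.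
      apply sum_eq; intros; ring.
    + intros t. unfold upoly, upoly_row. apply sum_eq. intros i _.
      rewrite <- sum_mult_l. apply sum_eq. intros; ring.
  - rewrite Derive_n_lin_comb by apply legendre_poly_fun. apply sum_eq; intros; ring.
Qed.

(** * Riemann integrals of piecewise continuous and separable functions *)

Lemma RInt_plus_R (f g : R -> R) a b : ex_RInt f a b -> ex_RInt g a b ->
  RInt (fun x => f x + g x) a b = RInt f a b + RInt g a b.
Proof. intros. apply (RInt_plus f g a b); auto. Qed.

Lemma ex_RInt_plus_R (f g : R -> R) a b : ex_RInt f a b -> ex_RInt g a b ->
  ex_RInt (fun x => f x + g x) a b.
Proof. intros. apply (ex_RInt_plus f g a b); auto. Qed.

Lemma RInt_scal_R (f : R -> R) c a b : ex_RInt f a b ->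
  RInt (fun x => c * f x) a b = c * RInt f a b.
Proof. intros. apply (RInt_scal f a b c); auto. Qed.

Lemma ex_RInt_scal_R (f : R -> R) c a b : ex_RInt f a b ->
  ex_RInt (fun x => c * f x) a b.
Proof. intros. apply (ex_RInt_scal f a b c); auto. Qed.

Lemma ex_RInt_sum (f : nat -> R -> R) N a b :
  (forall i, (i <= N)%nat -> ex_RInt (f i) a b) ->
  ex_RInt (fun x => sum_f_R0 (fun i => f i x) N) a b.
Proof.
  induction N; intros H; simpl. apply H; lia.
  apply ex_RInt_plus_R. apply IHN; intros; apply H; lia. apply H; lia.
Qed.

Lemma RInt_sum (f : nat -> R -> R) N a b :
  (forall i, (i <= N)%nat -> ex_RInt (f i) a b) ->
  RInt (fun x => sum_f_R0 (fun i => f i x) N) a b = sum_f_R0 (fun i => RInt (f i) a b) N.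
Proof.
  induction N; intros H; simpl. reflexivity.
  rewrite RInt_plus_R, IHN. reflexivity.
  - intros; apply H; lia.
  - apply ex_RInt_sum; intros; apply H; lia.
  - apply H; lia.
Qed.

Lemma RInt_ext_open (f g : R -> R) a b : a <= b ->
  (forall x, a < x < b -> f x = g x) -> RInt f a b = RInt g a b.
Proof. intros. apply RInt_ext. rewrite Rmin_left, Rmax_right by lra. auto. Qed.

Lemma continuous_ex_RInt (f : R -> R) a b : (forall x, continuous f x) -> ex_RInt f a b.
Proof. intros H. apply (ex_RInt_continuous (V:=R_CompleteNormedModule)). intros; apply H. Qed.

Lemma continuous_plus_R (f g : R -> R) x :
  continuous f x -> continuous g x -> continuous (fun t => f t + g t) x.
Proof. intros. apply (continuous_plus (V:=R_NormedModule)); auto. Qed.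

Lemma continuous_mult_R (f g : R -> R) x :
  continuous f x -> continuous g x -> continuous (fun t => f t * g t) x.
Proof. intros. apply (continuous_mult (K:=R_AbsRing)); auto. Qed.

Lemma continuous_sum (f : nat -> R -> R) N x : (forall i, continuous (f i) x) ->
  continuous (fun t => sum_f_R0 (fun i => f i t) N) x.
Proof. intros H; induction N; simpl; auto. apply continuous_plus_R; auto. Qed.

Lemma is_derive_continuous (f : R -> R) x l : is_derive f x l -> continuous f x.
Proof.
  intros. apply (ex_derive_continuous (K:=R_AbsRing) (V:=R_NormedModule)). eexists; eauto.
Qed.

Lemma RInt_parts (u u' v v' : R -> R) a b :
  (forall x, is_derive u x (u' x)) -> (forall x, is_derive v x (v' x)) ->
  (forall x, continuous u' x) -> (forall x, continuous v' x) ->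
  RInt (fun x => u' x * v x) a b + RInt (fun x => u x * v' x) a b = u b * v b - u a * v a.
Proof.
  intros Du Dv Cu Cv.
  assert (Cu0 : forall x, continuous u x) by (intros; eapply is_derive_continuous; eauto).
  assert (Cv0 : forall x, continuous v x) by (intros; eapply is_derive_continuous; eauto).
  rewrite <- RInt_plus_R by (apply continuous_ex_RInt; intros; apply continuous_mult_R; auto).
  apply is_RInt_unique, (is_RInt_derive (fun x => u x * v x)).
  - intros x _. apply (is_derive_mult u v); auto. intros; apply Rmult_comm.
  - intros x _. apply continuous_plus_R; apply continuous_mult_R; auto.
Qed.

(* The regularity class of the extensions [ext] below. *)
Definition pw_cont (h : R -> R) := exists g1 g2 g3 : R -> R,
  (forall x, continuous g1 x) /\ (forall x, continuous g2 x) /\ (forall x, continuous g3 x) /\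
  (forall x, x < -1 -> h x = g1 x) /\ (forall x, -1 < x < 1 -> h x = g2 x) /\
  (forall x, 1 < x -> h x = g3 x).

Lemma pw_cont_continuous h : (forall x, continuous h x) -> pw_cont h.
Proof. intros H. exists h, h, h. repeat split; auto. Qed.

Lemma pw_cont_const c : pw_cont (fun _ => c).
Proof. apply pw_cont_continuous. intros; apply continuous_const. Qed.

Lemma pw_cont_ext f g : pw_cont f -> (forall x, f x = g x) -> pw_cont g.
Proof.
  intros (f1 & f2 & f3 & c1 & c2 & c3 & e1 & e2 & e3) E.
  exists f1, f2, f3. repeat split; auto; intros; rewrite <- E; auto.
Qed.

Lemma pw_cont_plus f g : pw_cont f -> pw_cont g -> pw_cont (fun x => f x + g x).
Proof.
  intros (f1 & f2 & f3 & c1 & c2 & c3 & e1 & e2 & e3)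
         (g1 & g2 & g3 & d1 & d2 & d3 & k1 & k2 & k3).
  exists (fun x => f1 x + g1 x), (fun x => f2 x + g2 x), (fun x => f3 x + g3 x).
  repeat split; intros; try (apply continuous_plus_R; auto).
  - rewrite e1, k1; auto.
  - rewrite e2, k2; auto.
  - rewrite e3, k3; auto.
Qed.

Lemma pw_cont_mult f g : pw_cont f -> pw_cont g -> pw_cont (fun x => f x * g x).
Proof.
  intros (f1 & f2 & f3 & c1 & c2 & c3 & e1 & e2 & e3)
         (g1 & g2 & g3 & d1 & d2 & d3 & k1 & k2 & k3).
  exists (fun x => f1 x * g1 x), (fun x => f2 x * g2 x), (fun x => f3 x * g3 x).
  repeat split; intros; try (apply continuous_mult_R; auto).
  - rewrite e1, k1; auto.
  - rewrite e2, k2; auto.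
  - rewrite e3, k3; auto.
Qed.

Lemma pw_cont_scal c f : pw_cont f -> pw_cont (fun x => c * f x).
Proof. intros; apply pw_cont_mult; auto; apply pw_cont_const. Qed.

Lemma ex_RInt_continuous_on (h g : R -> R) a b : a <= b ->
  (forall x, continuous g x) -> (forall x, a < x < b -> h x = g x) -> ex_RInt h a b.
Proof.
  intros Hab Hg E. apply ex_RInt_ext with g.
  - rewrite Rmin_left, Rmax_right by lra. intros; rewrite E; auto.
  - apply continuous_ex_RInt; auto.
Qed.

Lemma pw_cont_ex_RInt_left h a b : pw_cont h -> a <= b <= -1 -> ex_RInt h a b.
Proof.
  intros (f1 & f2 & f3 & c1 & c2 & c3 & e1 & e2 & e3) Hab.
  apply ex_RInt_continuous_on with f1; try lra; auto. intros; apply e1; lra.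
Qed.

Lemma pw_cont_ex_RInt_mid h a b : pw_cont h -> -1 <= a <= b /\ b <= 1 -> ex_RInt h a b.
Proof.
  intros (f1 & f2 & f3 & c1 & c2 & c3 & e1 & e2 & e3) Hab.
  apply ex_RInt_continuous_on with f2; try lra; auto. intros; apply e2; lra.
Qed.

Lemma pw_cont_ex_RInt_right h a b : pw_cont h -> 1 <= a <= b -> ex_RInt h a b.
Proof.
  intros (f1 & f2 & f3 & c1 & c2 & c3 & e1 & e2 & e3) Hab.
  apply ex_RInt_continuous_on with f3; try lra; auto. intros; apply e3; lra.
Qed.

Lemma RInt_split_pw_cont h : pw_cont h ->
  RInt h (-2) 2 = RInt h (-2) (-1) + RInt h (-1) 1 + RInt h 1 2.
Proof.
  intros H.
  assert (X1 : ex_RInt h (-2) (-1)) by (apply pw_cont_ex_RInt_left; auto; lra).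
  assert (X2 : ex_RInt h (-1) 1) by (apply pw_cont_ex_RInt_mid; auto; lra).
  assert (X3 : ex_RInt h 1 2) by (apply pw_cont_ex_RInt_right; auto; lra).
  assert (X4 : ex_RInt h (-1) 2) by (apply ex_RInt_Chasles with 1; auto).
  assert (E1 : RInt h (-2) (-1) + RInt h (-1) 2 = RInt h (-2) 2)
    by (apply (RInt_Chasles h); auto).
  assert (E2 : RInt h (-1) 1 + RInt h 1 2 = RInt h (-1) 2)
    by (apply (RInt_Chasles h); auto).
  lra.
Qed.

Lemma ex_RInt_pw_cont_22 h : pw_cont h -> ex_RInt h (-2) 2.
Proof.
  intros H. apply ex_RInt_Chasles with (-1). apply pw_cont_ex_RInt_left; auto; lra.
  apply ex_RInt_Chasles with 1. apply pw_cont_ex_RInt_mid; auto; lra.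
  apply pw_cont_ex_RInt_right; auto; lra.
Qed.

Lemma RInt_pieces h g1 g2 g3 : pw_cont h ->
  (forall x, -2 < x < -1 -> h x = g1 x) -> (forall x, -1 < x < 1 -> h x = g2 x) ->
  (forall x, 1 < x < 2 -> h x = g3 x) ->
  RInt h (-2) 2 = RInt g1 (-2) (-1) + RInt g2 (-1) 1 + RInt g3 1 2.
Proof.
  intros H E1 E2 E3. rewrite RInt_split_pw_cont by auto.
  rewrite (RInt_ext_open h g1), (RInt_ext_open h g2), (RInt_ext_open h g3); auto; lra.
Qed.

Lemma RInt_11_le_22 h : pw_cont h -> (forall x, -2 < x < 2 -> 0 <= h x) ->
  RInt h (-1) 1 <= RInt h (-2) 2.
Proof.
  intros H Hp. rewrite (RInt_split_pw_cont h H).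
  assert (0 <= RInt h (-2) (-1)).
  { apply RInt_ge_0. lra. apply pw_cont_ex_RInt_left; auto; lra. intros; apply Hp; lra. }
  assert (0 <= RInt h 1 2).
  { apply RInt_ge_0. lra. apply pw_cont_ex_RInt_right; auto; lra. intros; apply Hp; lra. }
  lra.
Qed.

Definition std_interval (a b : R) := (a = -1 /\ b = 1) \/ (a = -2 /\ b = 2).

Lemma std_interval_11 : std_interval (-1) 1.
Proof. left; split; reflexivity. Qed.

Lemma std_interval_22 : std_interval (-2) 2.
Proof. right; split; reflexivity. Qed.

Lemma std_interval_lt a b : std_interval a b -> a < b.
Proof. intros [[-> ->]|[-> ->]]; lra. Qed.

Lemma pw_cont_ex_RInt h a b : pw_cont h -> std_interval a b -> ex_RInt h a b.
Proof.
  intros H [[-> ->]|[-> ->]].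
  - apply pw_cont_ex_RInt_mid; auto; lra.
  - apply ex_RInt_pw_cont_22; auto.
Qed.

(* Finite sums of tensor products of piecewise continuous functions: on these the
   iterated Riemann integral behaves like a double integral. *)
Inductive separable : (R -> R -> R) -> Prop :=
| separable_tensor p q : pw_cont p -> pw_cont q -> separable (fun x y => p x * q y)
| separable_plus F G : separable F -> separable G -> separable (fun x y => F x y + G x y)
| separable_ext F G : separable F -> (forall x y, F x y = G x y) -> separable G.

Lemma separable_mult F G : separable F -> separable G -> separable (fun x y => F x y * G x y).
Proof.
  intros SF. revert G.
  induction SF as [p q Pp Pq | F1 F2 S1 IH1 S2 IH2 | F1 F2 S1 IH1 E]; intros G SG.
  - induction SG as [p' q' Pp' Pq' | G1 G2 T1 IT1 T2 IT2 | G1 G2 T1 IT1 E'].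
    + apply separable_ext with (fun x y => (p x * p' x) * (q y * q' y)).
      * apply separable_tensor; apply pw_cont_mult; auto.
      * intros; ring.
    + apply separable_ext with (fun x y => p x * q y * G1 x y + p x * q y * G2 x y).
      * constructor; auto.
      * intros; ring.
    + apply separable_ext with (fun x y => p x * q y * G1 x y); auto.
      intros; rewrite E'; auto.
  - apply separable_ext with (fun x y => F1 x y * G x y + F2 x y * G x y).
    + constructor; auto.
    + intros; ring.
  - apply separable_ext with (fun x y => F1 x y * G x y); auto. intros; rewrite E; auto.
Qed.

Lemma separable_scal c F : separable F -> separable (fun x y => c * F x y).
Proof.
  intros; apply separable_mult; auto.
  apply separable_ext with (fun x y => c * 1).
  - apply separable_tensor; apply pw_cont_const.
  - intros; ring.
Qed.

Lemma separable_sum (F : nat -> R -> R -> R) N : (forall i, separable (F i)) ->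
  separable (fun x y => sum_f_R0 (fun i => F i x y) N).
Proof. intros Hs; induction N; simpl; auto. apply separable_plus; auto. Qed.

Lemma separable_sqr F : separable F -> separable (fun x y => F x y ^ 2).
Proof.
  intros. apply separable_ext with (fun x y => F x y * F x y).
  - apply separable_mult; auto.
  - intros; ring.
Qed.

Lemma separable_pw_cont_y F x : separable F -> pw_cont (F x).
Proof.
  induction 1.
  - apply pw_cont_scal; auto.
  - apply pw_cont_plus; auto.
  - apply pw_cont_ext with (F x); auto.
Qed.

Lemma separable_RInt_y F c d : separable F -> std_interval c d ->
  exists rho, pw_cont rho /\ forall x, ex_RInt (F x) c d /\ RInt (F x) c d = rho x.
Proof.
  intros S Hcd. induction S as [p q Pp Pq | F1 F2 _ [r1 [P1 E1]] _ [r2 [P2 E2]] | F1 F2 _ [r [P E]] E'].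
  - exists (fun x => p x * RInt q c d). split.
    + apply pw_cont_mult; auto; apply pw_cont_const.
    + intros x. split.
      * apply ex_RInt_scal_R. apply pw_cont_ex_RInt; auto.
      * apply RInt_scal_R. apply pw_cont_ex_RInt; auto.
  - exists (fun x => r1 x + r2 x). split. apply pw_cont_plus; auto.
    intros x. destruct (E1 x) as [X1 R1], (E2 x) as [X2 R2]. split.
    + apply ex_RInt_plus_R; auto.
    + rewrite RInt_plus_R, R1, R2; auto.
  - exists r. split; auto.
    intros x. destruct (E x) as [X R1]. split.
    + apply ex_RInt_ext with (F1 x); auto.
    + rewrite <- R1. symmetry. apply RInt_ext. auto.
Qed.

Lemma pw_cont_RInt_y F c d : separable F -> std_interval c d ->
  pw_cont (fun x => RInt (fun y => F x y) c d).
Proof.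
  intros S Hcd. destruct (separable_RInt_y F c d S Hcd) as [r [P E]].
  apply pw_cont_ext with r; auto. intros; symmetry; apply E.
Qed.

Lemma ex_RInt_y F x c d : separable F -> std_interval c d -> ex_RInt (F x) c d.
Proof.
  intros S Hcd. apply pw_cont_ex_RInt; auto. apply separable_pw_cont_y; auto.
Qed.

Definition RInt2 (a b c d : R) (F : R -> R -> R) : R :=
  RInt (fun x => RInt (fun y => F x y) c d) a b.

Section RInt2.

Variables a b c d : R.
Hypothesis Hab : std_interval a b.
Hypothesis Hcd : std_interval c d.

Lemma ex_RInt_RInt2 F : separable F -> ex_RInt (fun x => RInt (fun y => F x y) c d) a b.
Proof. intros S. apply pw_cont_ex_RInt; auto. apply pw_cont_RInt_y; auto. Qed.

Lemma RInt2_ext F G : (forall x y, F x y = G x y) -> RInt2 a b c d F = RInt2 a b c d G.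
Proof. intros E. apply RInt_ext. intros. apply RInt_ext. auto. Qed.

Lemma RInt2_ext_open F G :
  (forall x y, a < x < b -> c < y < d -> F x y = G x y) -> RInt2 a b c d F = RInt2 a b c d G.
Proof.
  intros E. pose proof (std_interval_lt a b Hab). pose proof (std_interval_lt c d Hcd).
  apply RInt_ext_open; [lra|]. intros. apply RInt_ext_open; [lra|]. auto.
Qed.

Lemma RInt2_plus F G : separable F -> separable G ->
  RInt2 a b c d (fun x y => F x y + G x y) = RInt2 a b c d F + RInt2 a b c d G.
Proof.
  intros SF SG. unfold RInt2. rewrite <- RInt_plus_R by (apply ex_RInt_RInt2; auto).
  apply RInt_ext. intros x _. apply RInt_plus_R; apply ex_RInt_y; auto.
Qed.

Lemma RInt2_scal k F : separable F ->
  RInt2 a b c d (fun x y => k * F x y) = k * RInt2 a b c d F.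
Proof.
  intros S. unfold RInt2. rewrite <- RInt_scal_R by (apply ex_RInt_RInt2; auto).
  apply RInt_ext. intros x _. apply RInt_scal_R, ex_RInt_y; auto.
Qed.

Lemma RInt2_sum (F : nat -> R -> R -> R) N : (forall i, separable (F i)) ->
  RInt2 a b c d (fun x y => sum_f_R0 (fun i => F i x y) N) =
  sum_f_R0 (fun i => RInt2 a b c d (F i)) N.
Proof.
  intros S. induction N as [|N IHN]. reflexivity.
  simpl. rewrite RInt2_plus, IHN; auto. apply separable_sum; auto.
Qed.

Lemma RInt2_tensor p q : pw_cont p -> pw_cont q ->
  RInt2 a b c d (fun x y => p x * q y) = RInt p a b * RInt q c d.
Proof.
  intros Pp Pq. unfold RInt2.
  rewrite (RInt_ext _ (fun x => RInt q c d * p x)).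
  - rewrite RInt_scal_R by (apply pw_cont_ex_RInt; auto). ring.
  - intros. rewrite RInt_scal_R by (apply pw_cont_ex_RInt; auto). apply Rmult_comm.
Qed.

Lemma RInt2_ge_0 F : separable F ->
  (forall x y, a < x < b -> c < y < d -> 0 <= F x y) -> 0 <= RInt2 a b c d F.
Proof.
  intros S Hp. pose proof (std_interval_lt a b Hab). pose proof (std_interval_lt c d Hcd).
  apply RInt_ge_0; [lra | apply ex_RInt_RInt2; auto |].
  intros x Hx. apply RInt_ge_0; [lra | apply ex_RInt_y; auto |]. auto.
Qed.

Lemma RInt2_mult_le F G : separable F -> separable G ->
  2 * Rabs (RInt2 a b c d (fun x y => F x y * G x y)) <=
  RInt2 a b c d (fun x y => F x y ^ 2) + RInt2 a b c d (fun x y => G x y ^ 2).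
Proof.
  intros SF SG.
  assert (Hsq : forall e, e = 1 \/ e = -1 ->
    0 <= RInt2 a b c d (fun x y => F x y ^ 2)
         + 2 * e * RInt2 a b c d (fun x y => F x y * G x y)
         + RInt2 a b c d (fun x y => G x y ^ 2)).
  { intros e He.
    rewrite <- RInt2_scal, <- !RInt2_plus;
      repeat (apply separable_plus || apply separable_scal || apply separable_sqr
              || apply separable_mult); auto.
    apply RInt2_ge_0.
    - repeat (apply separable_plus || apply separable_scal || apply separable_sqr
              || apply separable_mult); auto.
    - intros x y _ _. replace (F x y ^ 2 + 2 * e * (F x y * G x y) + G x y ^ 2)
        with ((F x y + e * G x y) ^ 2) by (destruct He; subst; ring).
      apply pow2_ge_0. }
  pose proof (Hsq 1 (or_introl eq_refl)). pose proof (Hsq (-1) (or_intror eq_refl)).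
  unfold Rabs; destruct Rcase_abs; lra.
Qed.

End RInt2.

Lemma RInt2_11_le_22 F : separable F -> (forall x y, 0 <= F x y) ->
  RInt2 (-1) 1 (-1) 1 F <= RInt2 (-2) 2 (-2) 2 F.
Proof.
  intros S Hp.
  destruct (separable_RInt_y F (-2) 2 S std_interval_22) as [r [Pr E]].
  unfold RInt2. apply Rle_trans with (RInt r (-1) 1).
  - apply RInt_le; [lra | apply ex_RInt_RInt2; auto using std_interval_11 |
                     apply pw_cont_ex_RInt_mid; auto; lra |].
    intros x _. rewrite <- (proj2 (E x)).
    apply RInt_11_le_22; auto. apply separable_pw_cont_y; auto.
  - rewrite (RInt_ext (fun x => RInt (fun y => F x y) (-2) 2) r) by (intros; apply E).
    apply RInt_11_le_22; auto.
    intros x _. rewrite <- (proj2 (E x)). apply RInt_ge_0; [lra | apply E | auto].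
Qed.

(** * Extension from (-1,1) to (-2,2) *)

(* [cutoff m] is the m-th derivative of the degree-7 polynomial [cutoff 0], which is 1 at 0
   with vanishing derivatives of order 1..3 there, and vanishes to order 4 at 1. *)
Definition cutoff (m : nat) (t : R) : R :=
  match m with
  | 0 => 1 - 35*t^4 + 84*t^5 - 70*t^6 + 20*t^7
  | 1 => -140*t^3 + 420*t^4 - 420*t^5 + 140*t^6
  | 2 => -420*t^2 + 1680*t^3 - 2100*t^4 + 840*t^5
  | 3 => -840*t + 5040*t^2 - 8400*t^3 + 4200*t^4
  | 4 => -840 + 10080*t - 25200*t^2 + 16800*t^3
  | _ => 0 end.

Definition cutoff_right (m : nat) (x : R) : R := cutoff m (x - 1).
Definition cutoff_left (m : nat) (x : R) : R := (-1) ^ m * cutoff m (-1 - x).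

Definition refl_scale (j : nat) : R := INR (S j) / 2.

(* Solution of the Vandermonde system sum_j c_j (-refl_scale j)^m = 1 for m = 0..3. *)
Definition refl_coef (j : nat) : R :=
  match j with 0 => 20 | 1 => -45 | 2 => 36 | _ => -10 end.

(* Hestenes reflection across p: the m-th derivative of x |-> sum_j c_j f (p - l_j (x - p))
   when F m = f^(m). *)
Definition reflect (p : R) (F : nat -> R -> R) (m : nat) (x : R) : R :=
  sum_f_R0 (fun j => refl_coef j * (- refl_scale j) ^ m * F m (p - refl_scale j * (x - p))) 3.

Fixpoint binom (n m : nat) : nat :=
  match n, m with
  | _, O => 1
  | O, S _ => 0
  | S n', S m' => (binom n' m' + binom n' (S m'))%nat
  end.

Definition leibniz (k : nat) (P Q : nat -> R -> R) (x : R) : R :=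
  sum_f_R0 (fun m => INR (binom k m) * P (k - m)%nat x * Q m x) k.

Definition ext_left (F : nat -> R -> R) (k : nat) : R -> R :=
  leibniz k cutoff_left (reflect (-1) F).
Definition ext_right (F : nat -> R -> R) (k : nat) : R -> R :=
  leibniz k cutoff_right (reflect 1 F).

(* Extension to (-2,2) of the family F of derivatives of a function on [-1,1]; [ext k F] is
   the k-th derivative of the extension, which is C^3 and vanishes to order 4 at -2 and 2. *)
Definition ext (k : nat) (F : nat -> R -> R) (x : R) : R :=
  if Rlt_dec x (-1) then ext_left F k x
  else if Rle_dec x 1 then F k x else ext_right F k x.

Definition deriv_family (F : nat -> R -> R) :=
  (forall m x, is_derive (F m) x (F (S m) x)) /\ (forall m x, continuous (F m) x).

Definition derivs (f : R -> R) : nat -> R -> R := fun m => Derive_n f m.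

Lemma derivs_deriv_family f : poly_fun f -> deriv_family (derivs f).
Proof.
  intros Hf. split; intros.
  - apply poly_fun_is_derive_n; auto.
  - apply poly_fun_continuous, poly_fun_Derive_n; auto.
Qed.

Lemma is_derive_val (f : R -> R) (x l l' : R) : is_derive f x l -> l = l' -> is_derive f x l'.
Proof. intros H ->; auto. Qed.

Lemma is_derive_const_R (c x : R) : is_derive (fun _ => c) x 0.
Proof. apply (is_derive_const c x). Qed.

Lemma is_derive_plus_R (f g : R -> R) x a b : is_derive f x a -> is_derive g x b ->
  is_derive (fun t => f t + g t) x (a + b).
Proof. intros. apply (is_derive_plus f g x a b); auto. Qed.

Lemma is_derive_mult_R (f g : R -> R) x a b : is_derive f x a -> is_derive g x b ->
  is_derive (fun t => f t * g t) x (a * g x + f x * b).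
Proof. intros. apply (is_derive_mult f g x a b); auto. intros; apply Rmult_comm. Qed.

Lemma is_derive_sum (f df : nat -> R -> R) N x :
  (forall i, (i <= N)%nat -> is_derive (f i) x (df i x)) ->
  is_derive (fun t => sum_f_R0 (fun i => f i t) N) x (sum_f_R0 (fun i => df i x) N).
Proof.
  induction N; intros H; simpl. apply H; lia.
  apply is_derive_plus_R. apply IHN; intros; apply H; lia. apply H; lia.
Qed.

Lemma cutoff_right_is_derive m x : (m <= 3)%nat ->
  is_derive (cutoff_right m) x (cutoff_right (S m) x).
Proof.
  intros Hm. unfold cutoff_right, cutoff.
  destruct m as [|[|[|[|m]]]]; try lia; auto_derive; auto; ring.
Qed.

Lemma cutoff_left_is_derive m x : (m <= 3)%nat ->
  is_derive (cutoff_left m) x (cutoff_left (S m) x).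
Proof.
  intros Hm. unfold cutoff_left, cutoff.
  destruct m as [|[|[|[|m]]]]; try lia; auto_derive; auto; simpl; ring.
Qed.

Lemma cutoff_right_continuous m x : continuous (cutoff_right m) x.
Proof.
  apply (ex_derive_continuous (K:=R_AbsRing) (V:=R_NormedModule)).
  unfold cutoff_right, cutoff. destruct m as [|[|[|[|[|m]]]]]; auto_derive; auto.
Qed.

Lemma cutoff_left_continuous m x : continuous (cutoff_left m) x.
Proof.
  apply (ex_derive_continuous (K:=R_AbsRing) (V:=R_NormedModule)).
  unfold cutoff_left, cutoff. destruct m as [|[|[|[|[|m]]]]]; auto_derive; auto.
Qed.

Lemma reflect_is_derive p F m x : (forall y, is_derive (F m) y (F (S m) y)) ->
  is_derive (reflect p F m) x (reflect p F (S m) x).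
Proof.
  intros HF. unfold reflect.
  apply (is_derive_sum
    (fun j t => refl_coef j * (- refl_scale j) ^ m * F m (p - refl_scale j * (t - p)))
    (fun j t => refl_coef j * (- refl_scale j) ^ S m * F (S m) (p - refl_scale j * (t - p)))).
  intros j _. eapply is_derive_val.
  - apply is_derive_mult_R. apply is_derive_const_R.
    apply (is_derive_comp (F m) (fun x => p - refl_scale j * (x - p))). apply HF.
    auto_derive; auto.
  - simpl. unfold scal; simpl; unfold mult; simpl. ring.
Qed.

Lemma reflect_continuous p F m x : (forall y, continuous (F m) y) ->
  continuous (reflect p F m) x.
Proof.
  intros HF. unfold reflect.
  apply (continuous_sum
    (fun j t => refl_coef j * (- refl_scale j) ^ m * F m (p - refl_scale j * (t - p)))).
  intros j. apply continuous_mult_R. apply continuous_const.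
  apply (continuous_comp (fun t => p - refl_scale j * (t - p)) (F m)); auto.
  apply (is_derive_continuous _ _ (- refl_scale j)). auto_derive; auto; ring.
Qed.

Lemma reflect_at p F m : (m <= 3)%nat -> reflect p F m p = F m p.
Proof.
  intros Hm. unfold reflect.
  rewrite (sum_eq _ (fun j => refl_coef j * (- refl_scale j) ^ m * F m p))
    by (intros; replace (p - refl_scale i * (p - p)) with p by ring; reflexivity).
  rewrite sum_mult_r.
  replace (sum_f_R0 (fun j => refl_coef j * (- refl_scale j) ^ m) 3) with 1; [ring|].
  destruct m as [|[|[|[|]]]]; try lia; unfold refl_scale, refl_coef; simpl; field.
Qed.

Ltac is_derive_leibniz P Q HP HQ :=
  repeat match goal with
  | |- is_derive (P _) _ _ => apply HP; lia
  | |- is_derive (Q _) _ _ => apply HQ; lia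
  | |- is_derive (fun _ => ?c) _ _ => apply is_derive_const_R
  | |- is_derive (fun t => _ + _) _ _ => apply is_derive_plus_R
  | |- is_derive (fun t => _ * _) _ _ => apply is_derive_mult_R
  end.

Lemma leibniz_is_derive k P Q x : (k <= 3)%nat ->
  (forall m, (m <= 3)%nat -> is_derive (P m) x (P (S m) x)) ->
  (forall m, (m <= 3)%nat -> is_derive (Q m) x (Q (S m) x)) ->
  is_derive (leibniz k P Q) x (leibniz (S k) P Q x).
Proof.
  intros Hk HP HQ. unfold leibniz.
  destruct k as [|[|[|[|k]]]]; try lia; simpl;
    (eapply is_derive_val; [is_derive_leibniz P Q HP HQ | cbv beta; ring]).
Qed.

Lemma leibniz_continuous k P Q x :
  (forall m, continuous (P m) x) -> (forall m, continuous (Q m) x) ->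
  continuous (leibniz k P Q) x.
Proof.
  intros HP HQ. unfold leibniz.
  apply (continuous_sum (fun m t => INR (binom k m) * P (k - m)%nat t * Q m t)). intros i.
  repeat apply continuous_mult_R; auto. apply continuous_const.
Qed.

Lemma ext_right_at_1 F k : (k <= 3)%nat -> ext_right F k 1 = F k 1.
Proof.
  intros Hk. unfold ext_right, leibniz, cutoff_right.
  replace (1 - 1) with 0 by ring.
  destruct k as [|[|[|[|]]]]; try lia; unfold cutoff; simpl;
    rewrite ?reflect_at by lia; ring.
Qed.

Lemma ext_right_at_2 F k : (k <= 3)%nat -> ext_right F k 2 = 0.
Proof.
  intros Hk. unfold ext_right, leibniz, cutoff_right.
  replace (2 - 1) with 1 by ring.
  destruct k as [|[|[|[|]]]]; try lia; unfold cutoff; simpl; ring.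
Qed.

Lemma ext_left_at_1 F k : (k <= 3)%nat -> ext_left F k (-1) = F k (-1).
Proof.
  intros Hk. unfold ext_left, leibniz, cutoff_left.
  replace (-1 - -1) with 0 by ring.
  destruct k as [|[|[|[|]]]]; try lia; unfold cutoff; simpl;
    rewrite ?reflect_at by lia; ring.
Qed.

Lemma ext_left_at_2 F k : (k <= 3)%nat -> ext_left F k (-2) = 0.
Proof.
  intros Hk. unfold ext_left, leibniz, cutoff_left.
  replace (-1 - -2) with 1 by ring.
  destruct k as [|[|[|[|]]]]; try lia; unfold cutoff; simpl; ring.
Qed.

Section Extension.

Variable F : nat -> R -> R.
Hypothesis HF : deriv_family F.

Lemma ext_right_is_derive k x : (k <= 3)%nat ->
  is_derive (ext_right F k) x (ext_right F (S k) x).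
Proof.
  intros Hk. apply leibniz_is_derive; auto; intros.
  - apply cutoff_right_is_derive; auto.
  - apply reflect_is_derive, HF.
Qed.

Lemma ext_left_is_derive k x : (k <= 3)%nat ->
  is_derive (ext_left F k) x (ext_left F (S k) x).
Proof.
  intros Hk. apply leibniz_is_derive; auto; intros.
  - apply cutoff_left_is_derive; auto.
  - apply reflect_is_derive, HF.
Qed.

Lemma ext_right_continuous k x : continuous (ext_right F k) x.
Proof.
  apply leibniz_continuous; intros.
  - apply cutoff_right_continuous.
  - apply reflect_continuous, HF.
Qed.

Lemma ext_left_continuous k x : continuous (ext_left F k) x.
Proof.
  apply leibniz_continuous; intros.
  - apply cutoff_left_continuous.
  - apply reflect_continuous, HF.
Qed.

End Extension.

Lemma ext_mid k F x : -1 <= x <= 1 -> ext k F x = F k x.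
Proof.
  intros H. unfold ext. destruct (Rlt_dec x (-1)); [lra|].
  destruct (Rle_dec x 1); [auto | lra].
Qed.

Lemma ext_gt_1 k F x : 1 < x -> ext k F x = ext_right F k x.
Proof.
  intros H. unfold ext. destruct (Rlt_dec x (-1)); [lra|].
  destruct (Rle_dec x 1); [lra | auto].
Qed.

Lemma ext_lt_1 k F x : x < -1 -> ext k F x = ext_left F k x.
Proof. intros H. unfold ext. destruct (Rlt_dec x (-1)); [auto | lra]. Qed.

Lemma ext_pw_cont k F : deriv_family F -> pw_cont (ext k F).
Proof.
  intros HF. exists (ext_left F k), (F k), (ext_right F k).
  repeat split; intros.
  - apply ext_left_continuous; auto.
  - apply HF.
  - apply ext_right_continuous; auto.
  - apply ext_lt_1; auto.
  - apply ext_mid; lra.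
  - apply ext_gt_1; auto.
Qed.

(* Integration by parts on (-2,2) without boundary terms: they cancel at -1 and 1 because
   the extension matches F up to order 3 there, and vanish at -2 and 2 thanks to the cutoff. *)
Lemma RInt_ext_parts F G m n : deriv_family F -> deriv_family G ->
  (m <= 3)%nat -> (n <= 3)%nat ->
  RInt (fun x => ext (S m) F x * ext n G x) (-2) 2 =
  - RInt (fun x => ext m F x * ext (S n) G x) (-2) 2.
Proof.
  intros HF HG Hm Hn.
  assert (Hpieces : forall k l, RInt (fun x => ext k F x * ext l G x) (-2) 2 =
      RInt (fun x => ext_left F k x * ext_left G l x) (-2) (-1)
    + RInt (fun x => F k x * G l x) (-1) 1
    + RInt (fun x => ext_right F k x * ext_right G l x) 1 2).
  { intros k l. apply RInt_pieces.
    - apply pw_cont_mult; apply ext_pw_cont; auto.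
    - intros; rewrite !ext_lt_1 by lra; reflexivity.
    - intros; rewrite !ext_mid by lra; reflexivity.
    - intros; rewrite !ext_gt_1 by lra; reflexivity. }
  rewrite !Hpieces.
  pose proof (RInt_parts (ext_left F m) (ext_left F (S m)) (ext_left G n) (ext_left G (S n))
    (-2) (-1) (fun x => ext_left_is_derive F HF m x Hm) (fun x => ext_left_is_derive G HG n x Hn)
    (ext_left_continuous F HF (S m)) (ext_left_continuous G HG (S n))) as Hleft.
  pose proof (RInt_parts (F m) (F (S m)) (G n) (G (S n)) (-1) 1
    (proj1 HF m) (proj1 HG n) (proj2 HF (S m)) (proj2 HG (S n))) as Hmid.
  pose proof (RInt_parts (ext_right F m) (ext_right F (S m)) (ext_right G n) (ext_right G (S n))
    1 2 (fun x => ext_right_is_derive F HF m x Hm) (fun x => ext_right_is_derive G HG n x Hn)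
    (ext_right_continuous F HF (S m)) (ext_right_continuous G HG (S n))) as Hright.
  rewrite ext_left_at_1, ext_left_at_2, ext_left_at_1, ext_left_at_2 in Hleft by auto.
  rewrite ext_right_at_1, ext_right_at_2, ext_right_at_1, ext_right_at_2 in Hright by auto.
  lra.
Qed.

(** * Linearity and L^2 bounds of the extension *)

Lemma sum_swap (f : nat -> nat -> R) N M :
  sum_f_R0 (fun i => sum_f_R0 (fun j => f i j) M) N =
  sum_f_R0 (fun j => sum_f_R0 (fun i => f i j) N) M.
Proof.
  induction N as [|N IHN]; simpl. reflexivity.
  rewrite IHN, plus_sum. reflexivity.
Qed.

Lemma reflect_lin_comb p (c : nat -> R) (F : nat -> nat -> R -> R) N m x :
  reflect p (fun m y => sum_f_R0 (fun i => c i * F i m y) N) m x =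
  sum_f_R0 (fun i => c i * reflect p (F i) m x) N.
Proof.
  unfold reflect.
  rewrite (sum_eq _ (fun j => sum_f_R0 (fun i => c i * (refl_coef j * (- refl_scale j) ^ m
    * F i m (p - refl_scale j * (x - p)))) N))
    by (intros; rewrite <- sum_mult_l; apply sum_eq; intros; ring).
  rewrite sum_swap. apply sum_eq; intros. apply sum_mult_l.
Qed.

Lemma leibniz_lin_comb k P Q (c : nat -> R) (Qs : nat -> nat -> R -> R) N x :
  (forall m, Q m x = sum_f_R0 (fun i => c i * Qs i m x) N) ->
  leibniz k P Q x = sum_f_R0 (fun i => c i * leibniz k P (Qs i) x) N.
Proof.
  intros HQ. unfold leibniz.
  rewrite (sum_eq _ (fun m => sum_f_R0 (fun i => c i * (INR (binom k m) * P (k - m)%nat x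
    * Qs i m x)) N)) by (intros; rewrite HQ, <- sum_mult_l; apply sum_eq; intros; ring).
  rewrite sum_swap. apply sum_eq; intros. apply sum_mult_l.
Qed.

Lemma ext_lin_comb k (c : nat -> R) (F : nat -> nat -> R -> R) N x :
  ext k (fun m y => sum_f_R0 (fun i => c i * F i m y) N) x =
  sum_f_R0 (fun i => c i * ext k (F i) x) N.
Proof.
  unfold ext, ext_left, ext_right.
  destruct (Rlt_dec x (-1)); [|destruct (Rle_dec x 1)]; auto;
    apply leibniz_lin_comb; intros; apply reflect_lin_comb.
Qed.

Lemma pow_between_0_1 t n : 0 <= t <= 1 -> 0 <= t ^ n <= 1.
Proof.
  intros H. split. apply pow_le; lra. replace 1 with (1 ^ n) by apply pow1.
  apply pow_incr; lra.
Qed.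

Lemma cutoff_bound m t : (m <= 4)%nat -> 0 <= t <= 1 -> Rabs (cutoff m t) <= 60000.
Proof.
  intros Hm Ht.
  pose proof (pow_between_0_1 t 2 Ht). pose proof (pow_between_0_1 t 3 Ht).
  pose proof (pow_between_0_1 t 4 Ht). pose proof (pow_between_0_1 t 5 Ht).
  pose proof (pow_between_0_1 t 6 Ht). pose proof (pow_between_0_1 t 7 Ht).
  apply Rabs_le. destruct m as [|[|[|[|[|]]]]]; try lia; unfold cutoff; split; lra.
Qed.

Lemma cutoff_right_bound m x : (m <= 4)%nat -> 1 <= x <= 2 ->
  Rabs (cutoff_right m x) <= 60000.
Proof. intros; apply cutoff_bound; auto; lra. Qed.

Lemma cutoff_left_bound m x : (m <= 4)%nat -> -2 <= x <= -1 ->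
  Rabs (cutoff_left m x) <= 60000.
Proof.
  intros. unfold cutoff_left. rewrite Rabs_mult, pow_1_abs, Rmult_1_l.
  apply cutoff_bound; auto; lra.
Qed.

Lemma binom_le_6 k m : (k <= 4)%nat -> (binom k m <= 6)%nat.
Proof.
  intros Hk. destruct k as [|[|[|[|[|]]]]]; try lia;
    destruct m as [|[|[|[|[|m]]]]]; simpl; lia.
Qed.

Lemma leibniz_sqr_le k P Q x A : (k <= 4)%nat -> 0 <= A ->
  (forall m, (m <= 4)%nat -> Rabs (P m x) <= A) ->
  (leibniz k P Q x) ^ 2 <= 5 * (6 * A) ^ 2 * sum_f_R0 (fun m => (Q m x) ^ 2) k.
Proof.
  intros Hk HA HP. unfold leibniz.
  eapply Rle_trans; [apply sum_sqr_le|].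
  assert (H5 : INR (S k) <= 5).
  { replace 5 with (INR 5) by (simpl; ring). apply le_INR; lia. }
  assert (Hterm : forall i, (i <= k)%nat ->
    (INR (binom k i) * P (k - i)%nat x * Q i x) ^ 2 <= (6 * A) ^ 2 * Q i x ^ 2).
  { intros i Hi.
    replace ((INR (binom k i) * P (k - i)%nat x * Q i x) ^ 2)
      with ((INR (binom k i) * P (k - i)%nat x) ^ 2 * Q i x ^ 2) by ring.
    apply Rmult_le_compat_r; [apply pow2_ge_0|].
    rewrite <- (pow2_abs (INR (binom k i) * P (k - i)%nat x)).
    apply pow_incr. split. apply Rabs_pos.
    rewrite Rabs_mult. apply Rmult_le_compat; try apply Rabs_pos.
    - rewrite Rabs_right by (apply Rle_ge, pos_INR). replace 6 with (INR 6) by (simpl; ring).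
      apply le_INR, binom_le_6; auto.
    - apply HP; lia. }
  apply sum_Rle in Hterm. rewrite sum_mult_l in Hterm.
  assert (0 <= sum_f_R0 (fun m => Q m x ^ 2) k) by (apply cond_pos_sum; intros; apply pow2_ge_0).
  assert (0 <= (6 * A) ^ 2) by apply pow2_ge_0.
  apply Rle_trans with (INR (S k) * ((6 * A) ^ 2 * sum_f_R0 (fun m => Q m x ^ 2) k)).
  - apply Rmult_le_compat_l; [apply pos_INR | exact Hterm].
  - rewrite (Rmult_assoc 5). apply Rmult_le_compat_r; [apply Rmult_le_pos|]; auto.
Qed.

Lemma refl_scale_bounds j : (j <= 3)%nat -> 1/2 <= refl_scale j <= 2.
Proof. intros. unfold refl_scale. destruct j as [|[|[|[|]]]]; try lia; simpl; lra. Qed.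

Lemma refl_factor_bound j m : (j <= 3)%nat -> (m <= 4)%nat ->
  Rabs (refl_coef j * (- refl_scale j) ^ m) <= 720.
Proof.
  intros Hj Hm. rewrite Rabs_mult, <- RPow_abs, Rabs_Ropp.
  destruct (refl_scale_bounds j Hj) as [Hl1 Hl2].
  rewrite (Rabs_right (refl_scale j)) by lra.
  assert (Hc : Rabs (refl_coef j) <= 45).
  { destruct j as [|[|[|[|]]]]; try lia; unfold refl_coef; unfold Rabs; destruct Rcase_abs; lra. }
  assert (refl_scale j ^ m <= 16).
  { apply Rle_trans with (2 ^ m). apply pow_incr; lra.
    destruct m as [|[|[|[|[|]]]]]; try lia; simpl; lra. }
  assert (0 <= refl_scale j ^ m) by (apply pow_le; lra).
  replace 720 with (45 * 16) by ring. apply Rmult_le_compat; auto. apply Rabs_pos.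
Qed.

Lemma reflect_sqr_le p F m x : (m <= 4)%nat ->
  (reflect p F m x) ^ 2 <=
  4 * 720 ^ 2 * sum_f_R0 (fun j => (F m (p - refl_scale j * (x - p))) ^ 2) 3.
Proof.
  intros Hm. unfold reflect. eapply Rle_trans; [apply sum_sqr_le|].
  replace (INR 4) with 4 by (simpl; ring).
  rewrite Rmult_assoc. apply Rmult_le_compat_l; [lra|].
  rewrite <- sum_mult_l. apply sum_Rle. intros j Hj.
  rewrite Rpow_mult_distr. apply Rmult_le_compat_r; [apply pow2_ge_0|].
  rewrite <- pow2_abs. apply pow_incr. split. apply Rabs_pos. apply refl_factor_bound; auto.
Qed.

Definition ext_const : R := 5 * (6 * 60000) ^ 2 * (4 * 720 ^ 2).

Lemma ext_const_pos : 0 < ext_const.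
Proof. unfold ext_const. lra. Qed.

Lemma ext_right_sqr_le F k x : (k <= 4)%nat -> 1 <= x <= 2 ->
  (ext_right F k x) ^ 2 <= ext_const *
    sum_f_R0 (fun m => sum_f_R0 (fun j => (F m (1 - refl_scale j * (x - 1))) ^ 2) 3) k.
Proof.
  intros Hk Hx. unfold ext_right.
  eapply Rle_trans; [apply (leibniz_sqr_le k cutoff_right (reflect 1 F) x 60000); auto; try lra|].
  - intros; apply cutoff_right_bound; auto.
  - unfold ext_const. rewrite (Rmult_assoc (5 * (6 * 60000) ^ 2)), <- (sum_mult_l (4 * 720 ^ 2)).
    apply Rmult_le_compat_l; [lra|]. apply sum_Rle. intros; apply reflect_sqr_le; lia.
Qed.

Lemma ext_left_sqr_le F k x : (k <= 4)%nat -> -2 <= x <= -1 ->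
  (ext_left F k x) ^ 2 <= ext_const *
    sum_f_R0 (fun m => sum_f_R0 (fun j => (F m (-1 - refl_scale j * (x - -1))) ^ 2) 3) k.
Proof.
  intros Hk Hx. unfold ext_left.
  eapply Rle_trans; [apply (leibniz_sqr_le k cutoff_left (reflect (-1) F) x 60000); auto; try lra|].
  - intros; apply cutoff_left_bound; auto.
  - unfold ext_const. rewrite (Rmult_assoc (5 * (6 * 60000) ^ 2)), <- (sum_mult_l (4 * 720 ^ 2)).
    apply Rmult_le_compat_l; [lra|]. apply sum_Rle. intros; apply reflect_sqr_le; lia.
Qed.

Lemma RInt_comp_lin_R (rho : R -> R) u v a b : u <> 0 ->
  ex_RInt rho (u * a + v) (u * b + v) ->
  ex_RInt (fun t => rho (u * t + v)) a b /\
  RInt (fun t => rho (u * t + v)) a b = / u * RInt rho (u * a + v) (u * b + v).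
Proof.
  intros Hu Hx.
  assert (E : forall t, rho (u * t + v) = / u * scal u (rho (u * t + v))).
  { intros; unfold scal; simpl; unfold mult; simpl. field; auto. }
  pose proof (ex_RInt_comp_lin rho u v a b Hx) as Hx'.
  split.
  - apply ex_RInt_ext with (fun t => / u * scal u (rho (u * t + v))).
    + intros; symmetry; apply E.
    + apply ex_RInt_scal_R, Hx'.
  - rewrite (RInt_ext _ (fun t => / u * scal u (rho (u * t + v)))) by (intros; apply E).
    rewrite RInt_scal_R by apply Hx'. f_equal. apply (RInt_comp_lin rho u v a b Hx).
Qed.

Section Reflected_integrals.

Variable rho : R -> R.
Hypothesis Hrho : pw_cont rho.
Hypothesis Hrho_pos : forall x, -1 <= x <= 1 -> 0 <= rho x.

Lemma RInt_sub_le c d : -1 <= c <= d -> d <= 1 -> RInt rho c d <= RInt rho (-1) 1.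
Proof.
  intros Hc Hd.
  assert (X : forall a b, -1 <= a <= b -> b <= 1 -> ex_RInt rho a b)
    by (intros; apply pw_cont_ex_RInt_mid; auto; lra).
  assert (P : forall a b, -1 <= a <= b -> b <= 1 -> 0 <= RInt rho a b)
    by (intros; apply RInt_ge_0; auto; try lra; intros; apply Hrho_pos; lra).
  assert (E1 : RInt rho (-1) c + RInt rho c 1 = RInt rho (-1) 1)
    by (apply (RInt_Chasles rho); apply X; lra).
  assert (E2 : RInt rho c d + RInt rho d 1 = RInt rho c 1)
    by (apply (RInt_Chasles rho); apply X; lra).
  pose proof (P (-1) c ltac:(lra) ltac:(lra)). pose proof (P d 1 ltac:(lra) ltac:(lra)).
  lra.
Qed.

Lemma RInt_reflect_right j : (j <= 3)%nat ->
  ex_RInt (fun t => rho (1 - refl_scale j * (t - 1))) 1 2 /\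
  RInt (fun t => rho (1 - refl_scale j * (t - 1))) 1 2 <= 2 * RInt rho (-1) 1.
Proof.
  intros Hj. destruct (refl_scale_bounds j Hj) as [L1 L2].
  set (l := refl_scale j) in *.
  assert (Ef : forall t, rho (1 - l * (t - 1)) = rho (- l * t + (1 + l)))
    by (intros; f_equal; ring).
  destruct (RInt_comp_lin_R rho (- l) (1 + l) 1 2) as [X E]; [lra| |].
  { apply ex_RInt_swap, pw_cont_ex_RInt_mid; auto; lra. }
  replace (- l * 1 + (1 + l)) with 1 in E by ring.
  replace (- l * 2 + (1 + l)) with (1 - l) in E by ring.
  split.
  - apply ex_RInt_ext with (fun t => rho (- l * t + (1 + l))); auto.
  - rewrite (RInt_ext _ (fun t => rho (- l * t + (1 + l)))) by auto.
    rewrite E, <- (opp_RInt_swap rho) by (apply pw_cont_ex_RInt_mid; auto; lra).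
    replace (/ - l * opp (RInt rho (1 - l) 1)) with (/ l * RInt rho (1 - l) 1)
      by (unfold opp; simpl; field; lra).
    pose proof (RInt_sub_le (1 - l) 1 ltac:(lra) ltac:(lra)).
    assert (0 <= RInt rho (1 - l) 1)
      by (apply RInt_ge_0; try lra; [apply pw_cont_ex_RInt_mid; auto; lra |
                                     intros; apply Hrho_pos; lra]).
    assert (/ l <= 2) by (rewrite <- (Rinv_inv 2); apply Rinv_le_contravar; lra).
    assert (0 <= / l) by (apply Rlt_le, Rinv_0_lt_compat; lra).
    nra.
Qed.

Lemma RInt_reflect_left j : (j <= 3)%nat ->
  ex_RInt (fun t => rho (-1 - refl_scale j * (t - -1))) (-2) (-1) /\
  RInt (fun t => rho (-1 - refl_scale j * (t - -1))) (-2) (-1) <= 2 * RInt rho (-1) 1.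
Proof.
  intros Hj. destruct (refl_scale_bounds j Hj) as [L1 L2].
  set (l := refl_scale j) in *.
  assert (Ef : forall t, rho (-1 - l * (t - -1)) = rho (- l * t + (-1 - l)))
    by (intros; f_equal; ring).
  destruct (RInt_comp_lin_R rho (- l) (-1 - l) (-2) (-1)) as [X E]; [lra| |].
  { apply ex_RInt_swap, pw_cont_ex_RInt_mid; auto; lra. }
  replace (- l * -2 + (-1 - l)) with (-1 + l) in E by ring.
  replace (- l * -1 + (-1 - l)) with (-1) in E by ring.
  split.
  - apply ex_RInt_ext with (fun t => rho (- l * t + (-1 - l))); auto.
  - rewrite (RInt_ext _ (fun t => rho (- l * t + (-1 - l)))) by auto.
    rewrite E, <- (opp_RInt_swap rho) by (apply pw_cont_ex_RInt_mid; auto; lra).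
    replace (/ - l * opp (RInt rho (-1) (-1 + l))) with (/ l * RInt rho (-1) (-1 + l))
      by (unfold opp; simpl; field; lra).
    pose proof (RInt_sub_le (-1) (-1 + l) ltac:(lra) ltac:(lra)).
    assert (0 <= RInt rho (-1) (-1 + l))
      by (apply RInt_ge_0; try lra; [apply pw_cont_ex_RInt_mid; auto; lra |
                                     intros; apply Hrho_pos; lra]).
    assert (/ l <= 2) by (rewrite <- (Rinv_inv 2); apply Rinv_le_contravar; lra).
    assert (0 <= / l) by (apply Rlt_le, Rinv_0_lt_compat; lra).
    nra.
Qed.

End Reflected_integrals.

Lemma RInt_double_sum_le (g : nat -> nat -> R -> R) (s : nat -> R) k a b :
  (forall m j, (j <= 3)%nat -> ex_RInt (g m j) a b /\ RInt (g m j) a b <= 2 * s m) ->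
  ex_RInt (fun t => sum_f_R0 (fun m => sum_f_R0 (fun j => g m j t) 3) k) a b /\
  RInt (fun t => sum_f_R0 (fun m => sum_f_R0 (fun j => g m j t) 3) k) a b
    <= 8 * sum_f_R0 s k.
Proof.
  intros H.
  assert (Xm : forall m, ex_RInt (fun t => sum_f_R0 (fun j => g m j t) 3) a b)
    by (intros; apply ex_RInt_sum; intros; apply H; auto).
  split; [apply ex_RInt_sum; auto|].
  rewrite RInt_sum by auto. rewrite <- sum_mult_l. apply sum_Rle. intros m _.
  rewrite RInt_sum by (intros; apply H; auto).
  apply Rle_trans with (sum_f_R0 (fun _ => 2 * s m) 3).
  - apply sum_Rle. intros; apply H; auto.
  - simpl. lra.
Qed.

(* L^2 bound for the extension: the left and right pieces are controlled pointwise by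
   reflected values, whose integrals are at most twice those over (-1,1). *)
Lemma RInt_22_le_reflected k (phi : R -> R) (rho : nat -> R -> R) K :
  0 <= K -> pw_cont phi -> (forall m, pw_cont (rho m)) ->
  (forall m x, -1 <= x <= 1 -> 0 <= rho m x) ->
  (forall t, -1 < t < 1 -> phi t <= sum_f_R0 (fun m => rho m t) k) ->
  (forall t, 1 < t < 2 -> phi t <=
     K * sum_f_R0 (fun m => sum_f_R0 (fun j => rho m (1 - refl_scale j * (t - 1))) 3) k) ->
  (forall t, -2 < t < -1 -> phi t <=
     K * sum_f_R0 (fun m => sum_f_R0 (fun j => rho m (-1 - refl_scale j * (t - -1))) 3) k) ->
  RInt phi (-2) 2 <= (1 + 16 * K) * sum_f_R0 (fun m => RInt (rho m) (-1) 1) k.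
Proof.
  intros HK Pphi Prho Hpos Hmid Hright Hleft.
  rewrite RInt_split_pw_cont by auto.
  set (S := sum_f_R0 (fun m => RInt (rho m) (-1) 1) k).
  assert (Xrho : forall m, ex_RInt (rho m) (-1) 1)
    by (intros; apply pw_cont_ex_RInt_mid; auto; lra).
  assert (HS : 0 <= S).
  { apply cond_pos_sum; intros. apply RInt_ge_0; auto; try lra. intros; apply Hpos; lra. }
  assert (M : RInt phi (-1) 1 <= S).
  { unfold S. rewrite <- RInt_sum by auto.
    apply RInt_le; try lra; auto. apply pw_cont_ex_RInt_mid; auto; lra.
    apply ex_RInt_sum; auto. }
  destruct (RInt_double_sum_le (fun m j t => rho m (1 - refl_scale j * (t - 1)))
    (fun m => RInt (rho m) (-1) 1) k 1 2) as [XR BR].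
  { intros m j Hj. apply RInt_reflect_right; auto. }
  destruct (RInt_double_sum_le (fun m j t => rho m (-1 - refl_scale j * (t - -1)))
    (fun m => RInt (rho m) (-1) 1) k (-2) (-1)) as [XL BL].
  { intros m j Hj. apply RInt_reflect_left; auto. }
  assert (R : RInt phi 1 2 <= K * (8 * S)).
  { eapply Rle_trans; [apply RInt_le with (g := fun t => K *
      sum_f_R0 (fun m => sum_f_R0 (fun j => rho m (1 - refl_scale j * (t - 1))) 3) k)|].
    - lra.
    - apply pw_cont_ex_RInt_right; auto; lra.
    - apply ex_RInt_scal_R, XR.
    - exact Hright.
    - rewrite RInt_scal_R by apply XR. apply Rmult_le_compat_l; auto. }
  assert (L : RInt phi (-2) (-1) <= K * (8 * S)).
  { eapply Rle_trans; [apply RInt_le with (g := fun t => K *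
      sum_f_R0 (fun m => sum_f_R0 (fun j => rho m (-1 - refl_scale j * (t - -1))) 3) k)|].
    - lra.
    - apply pw_cont_ex_RInt_left; auto; lra.
    - apply ex_RInt_scal_R, XL.
    - exact Hleft.
    - rewrite RInt_scal_R by apply XL. apply Rmult_le_compat_l; auto. }
  nra.
Qed.

(** * The two-dimensional estimate *)

Section Reflected_bounds.

Variables (H F : nat -> R -> R).
Hypothesis HF : forall m y, H m y = ext m F y.

Lemma ext_family_sqr_le_right k t : (k <= 4)%nat -> 1 < t < 2 ->
  H k t ^ 2 <= ext_const *
    sum_f_R0 (fun m => sum_f_R0 (fun j => H m (1 - refl_scale j * (t - 1)) ^ 2) 3) k.
Proof.
  intros Hk Ht. rewrite HF, ext_gt_1 by lra.
  eapply Rle_trans; [apply ext_right_sqr_le; auto; lra|].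
  right. f_equal. apply sum_eq; intros m _. apply sum_eq; intros j Hj.
  destruct (refl_scale_bounds j Hj).
  rewrite HF, ext_mid; auto. split; nra.
Qed.

Lemma ext_family_sqr_le_left k t : (k <= 4)%nat -> -2 < t < -1 ->
  H k t ^ 2 <= ext_const *
    sum_f_R0 (fun m => sum_f_R0 (fun j => H m (-1 - refl_scale j * (t - -1)) ^ 2) 3) k.
Proof.
  intros Hk Ht. rewrite HF, ext_lt_1 by lra.
  eapply Rle_trans; [apply ext_left_sqr_le; auto; lra|].
  right. f_equal. apply sum_eq; intros m _. apply sum_eq; intros j Hj.
  destruct (refl_scale_bounds j Hj).
  rewrite HF, ext_mid; auto. split; nra.
Qed.

End Reflected_bounds.

(* [ext_upoly W a k l] extends the derivative D^(k,l) u from S to (-2,2)^2, by extending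
   each factor of u = sum_i L_i(xi) (sum_j a_ij L_j(eta)) separately. *)
Definition ext_upoly (W : nat) (a : nat -> nat -> R) (k l : nat) (x y : R) : R :=
  sum_f_R0 (fun i => ext k (derivs (legendre i)) x * ext l (derivs (upoly_row W a i)) y) W.

Lemma pderiv_upoly_ext W a k l x y : -1 <= x <= 1 -> -1 <= y <= 1 ->
  pderiv k l (upoly W a) x y = ext_upoly W a k l x y.
Proof.
  intros Hx Hy. rewrite pderiv_upoly. unfold ext_upoly. apply sum_eq; intros.
  rewrite !ext_mid by auto. reflexivity.
Qed.

Lemma ext_upoly_ext_x W a k l x y : ext_upoly W a k l x y =
  ext k (fun m x' => sum_f_R0 (fun i => ext l (derivs (upoly_row W a i)) y
                                         * derivs (legendre i) m x') W) x.
Proof. rewrite ext_lin_comb. apply sum_eq; intros. apply Rmult_comm. Qed.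

Lemma ext_upoly_ext_y W a k l x y : ext_upoly W a k l x y =
  ext l (fun m y' => sum_f_R0 (fun i => ext k (derivs (legendre i)) x
                                         * derivs (upoly_row W a i) m y') W) y.
Proof. rewrite ext_lin_comb. reflexivity. Qed.

Lemma separable_ext_upoly W a k l : separable (ext_upoly W a k l).
Proof.
  unfold ext_upoly.
  apply (separable_sum (fun i x y =>
    ext k (derivs (legendre i)) x * ext l (derivs (upoly_row W a i)) y)).
  intros i. apply separable_tensor; apply ext_pw_cont, derivs_deriv_family.
  - apply legendre_poly_fun.
  - apply upoly_row_poly_fun.
Qed.

Lemma separable_ext_upoly_sqr W a k l : separable (fun x y => ext_upoly W a k l x y ^ 2).
Proof. apply separable_sqr, separable_ext_upoly. Qed.

Definition ext_factor : R := 1 + 16 * ext_const.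

Lemma ext_factor_ge_1 : 1 <= ext_factor.
Proof. unfold ext_factor. pose proof ext_const_pos. lra. Qed.

Lemma RInt_y_ext_upoly_le W a k l x : (l <= 4)%nat ->
  RInt (fun y => ext_upoly W a k l x y ^ 2) (-2) 2 <=
  ext_factor * sum_f_R0 (fun m => RInt (fun y => ext_upoly W a k m x y ^ 2) (-1) 1) l.
Proof.
  intros Hl. pose proof ext_const_pos.
  pose proof (fun m => separable_pw_cont_y _ x (separable_ext_upoly_sqr W a k m)) as Hpw.
  apply (RInt_22_le_reflected l _ (fun m y => ext_upoly W a k m x y ^ 2)); auto; try lra.
  - intros; apply pow2_ge_0.
  - intros t Ht. apply (sum_ge_last (fun m => ext_upoly W a k m x t ^ 2)).
    intros; apply pow2_ge_0.
  - intros t Ht. eapply (ext_family_sqr_le_right (fun m y => ext_upoly W a k m x y)); auto.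
    intros; apply ext_upoly_ext_y.
  - intros t Ht. eapply (ext_family_sqr_le_left (fun m y => ext_upoly W a k m x y)); auto.
    intros; apply ext_upoly_ext_y.
Qed.

Lemma RInt_le_scal_double_sum (phi : R -> R) (g : nat -> nat -> R -> R) K k c d :
  c <= d -> ex_RInt phi c d -> (forall m j, ex_RInt (g m j) c d) ->
  (forall y, c < y < d -> phi y <= K * sum_f_R0 (fun m => sum_f_R0 (fun j => g m j y) 3) k) ->
  RInt phi c d <= K * sum_f_R0 (fun m => sum_f_R0 (fun j => RInt (g m j) c d) 3) k.
Proof.
  intros Hcd Xphi Xg Hle.
  assert (Xm : forall m, ex_RInt (fun y => sum_f_R0 (fun j => g m j y) 3) c d)
    by (intros; apply ex_RInt_sum; auto).
  eapply Rle_trans; [apply RInt_le with (g := fun y => K *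
    sum_f_R0 (fun m => sum_f_R0 (fun j => g m j y) 3) k); auto|].
  - apply ex_RInt_scal_R, ex_RInt_sum; auto.
  - right. rewrite RInt_scal_R by (apply ex_RInt_sum; auto).
    rewrite RInt_sum by auto. f_equal. apply sum_eq; intros. apply RInt_sum; auto.
Qed.

Lemma RInt2_x_ext_upoly_le W a k l : (k <= 4)%nat ->
  RInt2 (-2) 2 (-1) 1 (fun x y => ext_upoly W a k l x y ^ 2) <=
  ext_factor * sum_f_R0 (fun m => RInt2 (-1) 1 (-1) 1 (fun x y => ext_upoly W a m l x y ^ 2)) k.
Proof.
  intros Hk. pose proof ext_const_pos. unfold ext_factor, RInt2.
  assert (X : forall m x, ex_RInt (fun y => ext_upoly W a m l x y ^ 2) (-1) 1)
    by (intros; apply (ex_RInt_y (fun x y => ext_upoly W a m l x y ^ 2));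
        [apply separable_ext_upoly_sqr | apply std_interval_11]).
  assert (Hext : forall y m x, ext_upoly W a m l x y = ext m (fun m x' =>
    sum_f_R0 (fun i => ext l (derivs (upoly_row W a i)) y * derivs (legendre i) m x') W) x)
    by (intros; apply ext_upoly_ext_x).
  apply (RInt_22_le_reflected k _ (fun m x => RInt (fun y => ext_upoly W a m l x y ^ 2) (-1) 1)).
  - lra.
  - apply pw_cont_RInt_y; [apply separable_ext_upoly_sqr | apply std_interval_11].
  - intros; apply pw_cont_RInt_y; [apply separable_ext_upoly_sqr | apply std_interval_11].
  - intros. apply RInt_ge_0; auto; try lra. intros; apply pow2_ge_0.
  - intros t Ht. apply (sum_ge_last (fun m => RInt (fun y => ext_upoly W a m l t y ^ 2) (-1) 1)).
    intros. apply RInt_ge_0; auto; try lra. intros; apply pow2_ge_0.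
  - intros t Ht. apply (RInt_le_scal_double_sum _
      (fun m j y => ext_upoly W a m l (1 - refl_scale j * (t - 1)) y ^ 2)); auto; try lra.
    intros y _. eapply (ext_family_sqr_le_right (fun m x => ext_upoly W a m l x y)); auto.
  - intros t Ht. apply (RInt_le_scal_double_sum _
      (fun m j y => ext_upoly W a m l (-1 - refl_scale j * (t - -1)) y ^ 2)); auto; try lra.
    intros y _. eapply (ext_family_sqr_le_left (fun m x => ext_upoly W a m l x y)); auto.
Qed.

Definition norm_S W a k l := RInt2 (-1) 1 (-1) 1 (fun x y => ext_upoly W a k l x y ^ 2).
Definition norm_E W a k l := RInt2 (-2) 2 (-2) 2 (fun x y => ext_upoly W a k l x y ^ 2).

Lemma norm_S_ge_0 W a k l : 0 <= norm_S W a k l.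
Proof.
  apply RInt2_ge_0; auto using separable_ext_upoly_sqr, std_interval_11.
  intros; apply pow2_ge_0.
Qed.

Lemma norm_S_le_norm_E W a k l : norm_S W a k l <= norm_E W a k l.
Proof. apply RInt2_11_le_22. apply separable_ext_upoly_sqr. intros; apply pow2_ge_0. Qed.

Lemma norm_E_le W a k l : (k <= 4)%nat -> (l <= 4)%nat ->
  norm_E W a k l <= ext_factor * sum_f_R0 (fun m =>
    ext_factor * sum_f_R0 (fun m' => norm_S W a m' m) k) l.
Proof.
  intros Hk Hl. pose proof ext_factor_ge_1. unfold norm_E, norm_S.
  assert (X : forall m c d, std_interval c d ->
    ex_RInt (fun x => RInt (fun y => ext_upoly W a k m x y ^ 2) c d) (-2) 2)
    by (intros; apply ex_RInt_RInt2; auto using separable_ext_upoly_sqr, std_interval_22).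
  eapply Rle_trans; [apply RInt_le with (g := fun x => ext_factor * sum_f_R0 (fun m =>
    RInt (fun y => ext_upoly W a k m x y ^ 2) (-1) 1) l)|].
  - lra.
  - apply X, std_interval_22.
  - apply ex_RInt_scal_R, ex_RInt_sum; intros; apply X, std_interval_11.
  - intros x _. apply RInt_y_ext_upoly_le; auto.
  - rewrite RInt_scal_R by (apply ex_RInt_sum; intros; apply X, std_interval_11).
    rewrite RInt_sum by (intros; apply X, std_interval_11).
    apply Rmult_le_compat_l; [lra|]. apply sum_Rle. intros m Hm.
    apply RInt2_x_ext_upoly_le; auto.
Qed.

Definition inner_E W a k l k' l' :=
  RInt2 (-2) 2 (-2) 2 (fun x y => ext_upoly W a k l x y * ext_upoly W a k' l' x y).

Definition ext_gram (f g : R -> R) (k k' : nat) : R :=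
  RInt (fun x => ext k (derivs f) x * ext k' (derivs g) x) (-2) 2.

Lemma ext_gram_pw_cont (f g : R -> R) k k' : poly_fun f -> poly_fun g ->
  pw_cont (fun x => ext k (derivs f) x * ext k' (derivs g) x).
Proof. intros. apply pw_cont_mult; apply ext_pw_cont, derivs_deriv_family; auto. Qed.

Lemma inner_E_expand W a k l k' l' :
  inner_E W a k l k' l' = sum_f_R0 (fun i => sum_f_R0 (fun i' =>
    ext_gram (legendre i) (legendre i') k k' *
    ext_gram (upoly_row W a i) (upoly_row W a i') l l') W) W.
Proof.
  unfold inner_E.
  set (p i i' x := ext k (derivs (legendre i)) x * ext k' (derivs (legendre i')) x).
  set (q i i' y := ext l (derivs (upoly_row W a i)) y * ext l' (derivs (upoly_row W a i')) y).
  assert (Pp : forall i i', pw_cont (p i i'))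
    by (intros; apply ext_gram_pw_cont; apply legendre_poly_fun).
  assert (Pq : forall i i', pw_cont (q i i'))
    by (intros; apply ext_gram_pw_cont; apply upoly_row_poly_fun).
  rewrite (RInt2_ext _ _ _ _ _
    (fun x y => sum_f_R0 (fun i => sum_f_R0 (fun i' => p i i' x * q i i' y) W) W)).
  - rewrite RInt2_sum; auto using std_interval_22.
    + apply sum_eq; intros i _. rewrite RInt2_sum; auto using std_interval_22.
      * apply sum_eq; intros i' _. apply RInt2_tensor; auto using std_interval_22.
      * intros. apply separable_tensor; auto.
    + intros i. apply (separable_sum (fun i' x y => p i i' x * q i i' y)).
      intros. apply separable_tensor; auto.
  - intros. unfold ext_upoly, p, q. rewrite sum_mult_sum.
    apply sum_eq; intros. apply sum_eq; intros. ring.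
Qed.

Lemma ext_gram_parts f g m n : poly_fun f -> poly_fun g -> (m <= 3)%nat -> (n <= 3)%nat ->
  ext_gram f g (S m) n = - ext_gram f g m (S n).
Proof. intros. apply RInt_ext_parts; auto; apply derivs_deriv_family; auto. Qed.

(* Integrating by parts in each variable turns the mixed norm ||D^(k,l) u||^2 into
   +-<D^(k1,l1) u, D^(k2,l2) u>, which is at most the mean of the two squared norms. *)
Lemma norm_E_le_mean W a k l k1 l1 k2 l2 e d :
  (forall f g, poly_fun f -> poly_fun g -> ext_gram f g k k = e * ext_gram f g k1 k2) ->
  (forall f g, poly_fun f -> poly_fun g -> ext_gram f g l l = d * ext_gram f g l1 l2) ->
  e * d = 1 \/ e * d = -1 ->
  norm_E W a k l <= (norm_E W a k1 l1 + norm_E W a k2 l2) / 2.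
Proof.
  intros Hx Hy Hed.
  assert (E : norm_E W a k l = e * d * inner_E W a k1 l1 k2 l2).
  { unfold norm_E. rewrite (RInt2_ext _ _ _ _ _ (fun x y =>
      ext_upoly W a k l x y * ext_upoly W a k l x y)) by (intros; ring).
    fold (inner_E W a k l k l). rewrite !inner_E_expand, <- sum_mult_l.
    apply sum_eq; intros. rewrite <- sum_mult_l. apply sum_eq; intros.
    rewrite Hx, Hy by auto using legendre_poly_fun, upoly_row_poly_fun. ring. }
  pose proof (RInt2_mult_le (-2) 2 (-2) 2 std_interval_22 std_interval_22
    (ext_upoly W a k1 l1) (ext_upoly W a k2 l2)
    (separable_ext_upoly W a k1 l1) (separable_ext_upoly W a k2 l2)) as Hcs.
  fold (inner_E W a k1 l1 k2 l2) in Hcs.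
  fold (norm_E W a k1 l1) (norm_E W a k2 l2) in Hcs.
  rewrite E. unfold Rabs in Hcs. destruct Rcase_abs, Hed as [-> | ->]; lra.
Qed.

Lemma norm_E_mixed_le W a X :
  norm_E W a 2 0 <= X -> norm_E W a 0 2 <= X -> norm_E W a 4 0 <= X -> norm_E W a 0 4 <= X ->
  norm_E W a 1 1 + norm_E W a 1 2 + norm_E W a 1 3 +
  norm_E W a 2 1 + norm_E W a 2 2 + norm_E W a 3 1 <= 6 * X.
Proof.
  intros H20 H02 H40 H04.
  assert (g11_20 : forall f g, poly_fun f -> poly_fun g ->
    ext_gram f g 1 1 = -1 * ext_gram f g 2 0)
    by (intros; rewrite (ext_gram_parts f g 1 0); auto; ring).
  assert (g11_02 : forall f g, poly_fun f -> poly_fun g ->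
    ext_gram f g 1 1 = -1 * ext_gram f g 0 2)
    by (intros; rewrite (ext_gram_parts f g 0 1); auto; ring).
  assert (g22_40 : forall f g, poly_fun f -> poly_fun g ->
    ext_gram f g 2 2 = 1 * ext_gram f g 4 0)
    by (intros; rewrite (ext_gram_parts f g 3 0), (ext_gram_parts f g 2 1); auto; ring).
  assert (g22_04 : forall f g, poly_fun f -> poly_fun g ->
    ext_gram f g 2 2 = 1 * ext_gram f g 0 4)
    by (intros; rewrite (ext_gram_parts f g 1 2), (ext_gram_parts f g 0 3); auto; ring).
  assert (g22_22 : forall f g, poly_fun f -> poly_fun g ->
    ext_gram f g 2 2 = 1 * ext_gram f g 2 2) by (intros; ring).
  assert (g33_42 : forall f g, poly_fun f -> poly_fun g ->
    ext_gram f g 3 3 = -1 * ext_gram f g 4 2)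
    by (intros; rewrite (ext_gram_parts f g 3 2); auto; ring).
  pose proof (norm_E_le_mean W a 1 1 2 0 0 2 (-1) (-1) g11_20 g11_02 ltac:(left; ring)).
  pose proof (norm_E_le_mean W a 2 1 2 0 2 2 1 (-1) g22_22 g11_02 ltac:(right; ring)).
  pose proof (norm_E_le_mean W a 1 2 0 2 2 2 (-1) 1 g11_02 g22_22 ltac:(right; ring)).
  pose proof (norm_E_le_mean W a 2 2 4 0 0 4 1 1 g22_40 g22_04 ltac:(left; ring)).
  pose proof (norm_E_le_mean W a 3 1 4 0 2 2 (-1) (-1) g33_42 g11_02 ltac:(left; ring)).
  pose proof (norm_E_le_mean W a 1 3 0 4 2 2 (-1) (-1) g11_02 g33_42 ltac:(left; ring)).
  lra.
Qed.

Lemma Cform_upoly W a : Cform (upoly W a) =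
  norm_S W a 4 0 + norm_S W a 0 4 + norm_S W a 3 0 + norm_S W a 0 3 + norm_S W a 2 0 +
  norm_S W a 0 2 + norm_S W a 1 0 + norm_S W a 0 1 + norm_S W a 0 0.
Proof.
  unfold Cform. change intS with (RInt2 (-1) 1 (-1) 1).
  rewrite (RInt2_ext_open _ _ _ _ std_interval_11 std_interval_11 _ (fun x y =>
    ext_upoly W a 4 0 x y ^ 2 + ext_upoly W a 0 4 x y ^ 2 + ext_upoly W a 3 0 x y ^ 2 +
    ext_upoly W a 0 3 x y ^ 2 + ext_upoly W a 2 0 x y ^ 2 + ext_upoly W a 0 2 x y ^ 2 +
    ext_upoly W a 1 0 x y ^ 2 + ext_upoly W a 0 1 x y ^ 2 + ext_upoly W a 0 0 x y ^ 2))
    by (intros; rewrite !pderiv_upoly_ext by lra; reflexivity).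
  rewrite !RInt2_plus; auto using std_interval_11;
    repeat apply separable_plus; apply separable_ext_upoly_sqr.
Qed.

Lemma Bform_upoly W a : Bform (upoly W a) = Cform (upoly W a) +
  (norm_S W a 1 1 + norm_S W a 1 2 + norm_S W a 1 3 +
   norm_S W a 2 1 + norm_S W a 2 2 + norm_S W a 3 1).
Proof.
  unfold Bform. change intS with (RInt2 (-1) 1 (-1) 1).
  rewrite (RInt2_ext_open _ _ _ _ std_interval_11 std_interval_11 _ (fun x y =>
    sum_f_R0 (fun k => sum_f_R0 (fun l => ext_upoly W a k l x y ^ 2) (4 - k)) 4))
    by (intros; apply sum_eq; intros; apply sum_eq; intros;
        rewrite pderiv_upoly_ext by lra; reflexivity).
  rewrite RInt2_sum; auto using std_interval_11.
  - rewrite (sum_eq _ (fun k => sum_f_R0 (fun l => norm_S W a k l) (4 - k)))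
      by (intros; apply RInt2_sum; auto using std_interval_11, separable_ext_upoly_sqr).
    rewrite Cform_upoly. simpl. ring.
  - intros k. apply (separable_sum (fun l x y => ext_upoly W a k l x y ^ 2)).
    intros; apply separable_ext_upoly_sqr.
Qed.

Lemma norm_E_pure_le W a k : (k <= 4)%nat ->
  norm_E W a k 0 <= ext_factor ^ 2 * Cform (upoly W a) /\
  norm_E W a 0 k <= ext_factor ^ 2 * Cform (upoly W a).
Proof.
  intros Hk. pose proof ext_factor_ge_1.
  pose proof (norm_S_ge_0 W a 0 0). pose proof (norm_S_ge_0 W a 1 0).
  pose proof (norm_S_ge_0 W a 2 0). pose proof (norm_S_ge_0 W a 3 0).
  pose proof (norm_S_ge_0 W a 4 0). pose proof (norm_S_ge_0 W a 0 1).
  pose proof (norm_S_ge_0 W a 0 2). pose proof (norm_S_ge_0 W a 0 3).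
  pose proof (norm_S_ge_0 W a 0 4).
  assert (Hx : sum_f_R0 (fun m => norm_S W a m 0) k <= Cform (upoly W a))
    by (rewrite Cform_upoly; destruct k as [|[|[|[|[|]]]]]; try lia; simpl; lra).
  assert (Hy : sum_f_R0 (fun m => norm_S W a 0 m) k <= Cform (upoly W a))
    by (rewrite Cform_upoly; destruct k as [|[|[|[|[|]]]]]; try lia; simpl; lra).
  assert (0 <= ext_factor ^ 2) by apply pow2_ge_0.
  split; (eapply Rle_trans; [apply norm_E_le; lia|]).
  - replace (ext_factor * sum_f_R0 (fun m => ext_factor *
      sum_f_R0 (fun m' => norm_S W a m' m) k) 0)
      with (ext_factor ^ 2 * sum_f_R0 (fun m => norm_S W a m 0) k) by (simpl; ring).
    apply Rmult_le_compat_l; auto.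
  - replace (ext_factor * sum_f_R0 (fun m => ext_factor *
      sum_f_R0 (fun m' => norm_S W a m' m) 0) k)
      with (ext_factor ^ 2 * sum_f_R0 (fun m => norm_S W a 0 m) k)
      by (rewrite sum_mult_l; simpl; ring).
    apply Rmult_le_compat_l; auto.
Qed.

Lemma norm_S_mixed_le W a :
  norm_S W a 1 1 + norm_S W a 1 2 + norm_S W a 1 3 +
  norm_S W a 2 1 + norm_S W a 2 2 + norm_S W a 3 1 <= 6 * ext_factor ^ 2 * Cform (upoly W a).
Proof.
  pose proof (norm_S_le_norm_E W a 1 1). pose proof (norm_S_le_norm_E W a 1 2).
  pose proof (norm_S_le_norm_E W a 1 3). pose proof (norm_S_le_norm_E W a 2 1).
  pose proof (norm_S_le_norm_E W a 2 2). pose proof (norm_S_le_norm_E W a 3 1).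
  pose proof (norm_E_mixed_le W a (ext_factor ^ 2 * Cform (upoly W a))
    (proj1 (norm_E_pure_le W a 2 ltac:(lia))) (proj2 (norm_E_pure_le W a 2 ltac:(lia)))
    (proj1 (norm_E_pure_le W a 4 ltac:(lia))) (proj2 (norm_E_pure_le W a 4 ltac:(lia)))).
  lra.
Qed.

Theorem theorem2p2 :
  exists M : R, 0 < M /\
    forall (W : nat) (a : nat -> nat -> R), (1 <= W)%nat ->
      / M * Bform (upoly W a) <= Cform (upoly W a) /\
      Cform (upoly W a) <= Bform (upoly W a).
Proof.
  set (K := ext_factor ^ 2).
  assert (HK : 0 <= K) by apply pow2_ge_0.
  exists (1 + 6 * K). split; [lra|].
  intros W a _. rewrite Bform_upoly.
  pose proof (norm_S_mixed_le W a) as Hmixed. fold K in Hmixed.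
  assert (HC : 0 <= Cform (upoly W a))
    by (rewrite Cform_upoly; pose proof norm_S_ge_0; repeat apply Rplus_le_le_0_compat; auto).
  pose proof (norm_S_ge_0 W a 1 1). pose proof (norm_S_ge_0 W a 1 2).
  pose proof (norm_S_ge_0 W a 1 3). pose proof (norm_S_ge_0 W a 2 1).
  pose proof (norm_S_ge_0 W a 2 2). pose proof (norm_S_ge_0 W a 3 1).
  split; [|lra].
  apply Rmult_le_reg_l with (1 + 6 * K); [lra|].
  rewrite <- Rmult_assoc, Rinv_r, Rmult_1_l by lra. lra.
Qed.
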